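(* Let $R$ be a reflexive relation on $U$ such that $\mathrm{DM(RS)}$ is completely distributive. Let $x,y\in U\setminus\mathcal S$ be such that $\{x\}^{\blacktriangle}$ and $\{y\}^{\blacktriangle}$ are completely join-irreducible in $\wp(U)^{\blacktriangle}$. The following are equivalent: (i) there exists $u\in U$ with $\{x\}^{\blacktriangle},\{y\}^{\blacktriangle}\subseteq\{u\}^{\blacktriangle}$; (ii) each of $(\emptyset,\{x\}^{\blacktriangle})$ and $(\emptyset,\{y\}^{\blacktriangle})$ is below both $g(\emptyset,\{x\}^{\blacktriangle})$ and $g(\emptyset,\{y\}^{\blacktriangle})$ in $\mathrm{DM(RS)}$.
   Context: Let $U$ be a set and $R\subseteq U\times U$ a binary relation. For $x\in U$, $R(x)=\{y\in U\mid (x,y)\in R\}$ and $\breve R(x)=\{y\in U\mid (y,x)\in R\}$. For $X\subseteq U$: $X^{\blacktriangledown}=\{x\in U\mid R(x)\subseteq X\}$, $X^{\blacktriangle}=\{x\in U\mid R(x)\cap X\neq\emptyset\}$, $X^{\triangledown}=\{x\in U\mid \breve R(x)\subseteq X\}$, $X^{\vartriangle}=\{x\in U\mid \breve R(x)\cap X\neq\emptyset\}$; composites like $X^{\vartriangle\blacktriangledown}$ mean $(X^{\vartriangle})^{\blacktriangledown}$. $\wp(U)^{\blacktriangledown}=\{X^{\blacktriangledown}\mid X\subseteq U\}$, $\wp(U)^{\blacktriangle}=\{X^{\blacktriangle}\mid X\subseteq U\}$, complete lattices under $\subseteq$. $\mathcal S=\{x\in U\mid |R(x)|=1\}$. $\mathrm{RS}=\{(X^{\blacktriangledown},X^{\blacktriangle})\mid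 X\subseteq U\}$ ordered coordinatewise; $\mathrm{DM(RS)}$ is its Dedekind–MacNeille completion, identified with $\{(A,B)\in\wp(U)^{\blacktriangledown}\times\wp(U)^{\blacktriangle}\mid A^{\vartriangle\blacktriangle}\subseteq B,\ A\cap\mathcal S=B\cap\mathcal S\}$ ordered coordinatewise, with meets $\bigwedge_i(X_i,Y_i)=(\bigcap_iX_i,(\bigcap_iY_i)^{\triangledown\blacktriangle})$ and joins $\bigvee_i(X_i,Y_i)=((\bigcup_iX_i)^{\vartriangle\blacktriangledown},\bigcup_iY_i)$. An element $j$ of a complete lattice is completely join-irreducible if $j=\bigvee S$ implies $j\in S$. When $\mathrm{DM(RS)}$ is distributive ($R$ reflexive) it is a Kleene algebra with $\sim(A,B)=(B^c,A^c)$; for a completely join-irreducible $j$ of $\mathrm{DM(RS)}$, $g(j)=\bigwedge\{a\in\mathrm{DM(RS)}\mid a\not\le\sim j\}$. (Under the hypotheses, $(\emptyset,\{x\}^{\blacktriangle})$ and $(\emptyset,\{y\}^{\blacktriangle})$ are completely join-irreducible elements of $\mathrm{DM(RS)}$.) *)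

From mathcomp Require Import all_boot.
From mathcomp Require Import boolp classical_sets.
Set Implicit Arguments. Unset Strict Implicit. Unset Printing Implicit Defensive.
Local Open Scope classical_set_scope.

Section RoughSets.
Variables (U : Type) (R : U -> U -> Prop).

Definition Rsucc (x : U) : set U := [set y | R x y].
Definition Rpred (x : U) : set U := [set y | R y x].

(* X^{black down}, X^{black up}, X^{white down}, X^{white up} *)
Definition lowB (X : set U) : set U := [set x | Rsucc x `<=` X].
Definition uppB (X : set U) : set U := [set x | Rsucc x `&` X !=set0].
Definition lowW (X : set U) : set U := [set x | Rpred x `<=` X].
Definition uppW (X : set U) : set U := [set x | Rpred x `&` X !=set0].

(* the carriers wp(U)^{black down} and wp(U)^{black up} *)
Definition lowB_image : set (set U) := [set A | exists X, A = lowB X].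
Definition uppB_image : set (set U) := [set A | exists X, A = uppB X].

Definition singR : set U := [set x | exists y, Rsucc x = [set y]].

(* DM(RS), as a set of pairs of subsets of U *)
Definition DMc : set (set U * set U) :=
  [set p | lowB_image p.1 /\ uppB_image p.2 /\
           uppB (uppW p.1) `<=` p.2 /\ p.1 `&` singR = p.2 `&` singR].

Definition dm_le (p q : set U * set U) : Prop := p.1 `<=` q.1 /\ p.2 `<=` q.2.

Definition dm_meet (F : set (set U * set U)) : set U * set U :=
  (\bigcap_(a in F) a.1, uppB (lowW (\bigcap_(a in F) a.2))).
Definition dm_join (F : set (set U * set U)) : set U * set U :=
  (lowB (uppW (\bigcup_(a in F) a.1)), \bigcup_(a in F) a.2).

Definition DM_completely_distributive : Prop :=
  forall (I : Type) (J : I -> Type) (x : forall i, J i -> set U * set U),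
    (forall i j, DMc (x i j)) ->
    dm_meet (range (fun i => dm_join (range (x i)))) =
    dm_join (range (fun f : (forall i, J i) => dm_meet (range (fun i => x i (f i))))).

Definition dm_neg (p : set U * set U) : set U * set U := (~` p.2, ~` p.1).

Definition dm_g (j : set U * set U) : set U * set U :=
  dm_meet [set a | DMc a /\ ~ dm_le a (dm_neg j)].

End RoughSets.

Definition is_lub_in (T : Type) (C : set T) (le : T -> T -> Prop)
  (S : set T) (a : T) : Prop :=
  C a /\ (forall s, S s -> le s a) /\
  (forall b, C b -> (forall s, S s -> le s b) -> le a b).

Definition cji_in (T : Type) (C : set T) (le : T -> T -> Prop) (j : T) : Prop :=
  C j /\ forall S, S `<=` C -> is_lub_in C le S j -> S j.

From mathcomp Require Import all_boot.
From mathcomp Require Import boolp classical_sets.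
Local Open Scope classical_set_scope.

(* Write [X] for {x}^▲ = {p | R p x}.  Complete distributivity of DM(RS)
   makes every completely join-irreducible X of ℘(U)^▲ completely
   join-prime: X sits inside one of the ▲-sets of any family covering it.
   Condition (ii) says that for R t x and R z y the sets R(t) and R(z)
   meet (test g against the pair (R(z)^▼, R(z)^▲) of DM(RS)); so [x] is
   covered by the [u] with u in R(z), hence [x] ⊆ [u] for some such u,
   and [y] is then covered by the [u] containing [x]; join-primeness of
   [y] yields the common upper bound of (i). *)

Set Implicit Arguments.
Unset Strict Implicit.

Section DMRoughSets.
Variables (U : Type) (R : U -> U -> Prop).

Lemma uppB_set1 (x : U) : uppB R [set x] = Rpred R x.
Proof.
apply/seteqP; split=> p /=; first by case=> q [Rpq <-].
by move=> Rpx; exists x.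
Qed.

Lemma uppB_lowW_sub (W : set U) : uppB R (lowW R W) `<=` W.
Proof. by move=> p [v [Rpv Wv]]; apply: Wv. Qed.

Lemma uppB_set1_sub_uppB_lowW (x : U) (W : set U) :
  uppB R [set x] `<=` W -> uppB R [set x] `<=` uppB R (lowW R W).
Proof. by rewrite uppB_set1 => xW p Rpx; exists x. Qed.

Lemma dm_le_neg_set0 (a : set U * set U) (B : set U) :
  dm_le a (dm_neg (set0, B)) <-> a.1 `<=` ~` B.
Proof. by rewrite /dm_le /=; split=> [[] | ?]; last split=> // p _ []. Qed.

Lemma dm_le_set0_g (A B : set U) (u : U) :
  A `<=` uppB R [set u] -> B `<=` uppB R [set u] ->
  dm_le (set0, A) (dm_g R (set0, B)).
Proof.
rewrite uppB_set1 => Au Bu; split=> //= p Ap; exists u; split; first exact: Au.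
move=> q Rqu a [[_ [_ [a_closed _]]] /dm_le_neg_set0 a1_meets_B].
have [z [a1z Bz]] : exists z, a.1 z /\ B z.
  apply: contra_notP a1_meets_B => no_z z a1z Bz.
  by apply: no_z; exists z.
apply: a_closed; exists u; split=> //.
by exists z; split=> //; apply: Bu.
Qed.

Section Reflexive.
Hypothesis Rrefl : forall z, R z z.

Lemma singR_Rsucc (s r : U) : singR R s -> R s r -> r = s.
Proof.
case=> w Rs_w Rsr.
have Rss : Rsucc R s s := Rrefl s.
have Rsr' : Rsucc R s r := Rsr.
by rewrite Rs_w in Rss Rsr'; rewrite Rsr' Rss.
Qed.

Lemma DMc_rough (X : set U) : DMc R (lowB R X, uppB R X).
Proof.
split; first by exists X.
split; first by exists X.
split=> [p [q [Rpq [r [Rrq lowXr]]]] | /=].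
  by exists q; split=> //; apply: lowXr.
apply/seteqP; split=> s [Xs Ss]; split=> //.
  by exists s; split; [exact: Rrefl | apply: Xs; exact: Rrefl].
case: Xs => w [Rsw Xw] r Rsr.
by rewrite (singR_Rsucc Ss Rsr) -(singR_Rsucc Ss Rsw).
Qed.

(* The least element of DM(RS) with second component B, since A ∩ S = B ∩ S. *)
Definition dm_of_uppB (B : set U) : set U * set U := (B `&` singR R, B).

Lemma DMc_dm_of_uppB (B : set U) : uppB_image R B -> DMc R (dm_of_uppB B).
Proof.
case=> X ->; split; last split; last split; rewrite /dm_of_uppB /=.
- exists (uppB R X `&` singR R); apply/seteqP; split=> q.
    by move=> [Xq Sq] r Rqr; rewrite (singR_Rsucc Sq Rqr).
  by apply; exact: Rrefl.
- by exists X.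
- move=> p [r [Rpr [s [Rsr [[q [Rsq Xq]] Ss]]]]].
  by exists r; split=> //; rewrite (singR_Rsucc Ss Rsr) -(singR_Rsucc Ss Rsq).
- by rewrite -setIA setIid.
Qed.

Lemma common_Rsucc_of_dm_le_set0_g (A B : set U) (t z : U) :
  dm_le (set0, A) (dm_g R (set0, B)) -> A t -> B z ->
  exists w, R t w /\ R z w.
Proof.
move=> [_ AgB] At Bz.
have [v [Rtv lowWv]] := AgB t At.
have meets_B : ~ dm_le (lowB R (Rsucc R z), uppB R (Rsucc R z)) (dm_neg (set0, B)).
  by move=> /dm_le_neg_set0 disj; exact: (disj z (fun _ => id) Bz).
have [w [Rtw Rzw]] := lowWv t Rtv _ (conj (DMc_rough (Rsucc R z)) meets_B).
by exists w.
Qed.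

Hypothesis HCD : DM_completely_distributive R.

Lemma cji_uppB_set1_join_prime (x : U)
    (cjx : cji_in (uppB_image R) (fun A B : set U => A `<=` B) (uppB R [set x]))
    (I : Type) (Y : I -> set U) :
  (forall i, uppB_image R (Y i)) -> uppB R [set x] `<=` \bigcup_i Y i ->
  exists i, uppB R [set x] `<=` Y i.
Proof.
set X := uppB R [set x] => Yupp XY.
have Xx : X x by rewrite /X uppB_set1.
have [i0 _ _] := XY x Xx.
pose F (b : bool) (i : I) := dm_of_uppB (if b then X else Y i).
have DMF b i : DMc R (F b i).
  by apply: DMc_dm_of_uppB; case: b => //; exists [set x].
pose M (f : bool -> I) := (dm_meet R (range (fun b => F b (f b)))).2.
have M_sub f b : M f `<=` (F b (f b)).2.
  by move=> p /uppB_lowW_sub; apply; exists b.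
(* Distributivity turns X = X ∧ ⋁ Y_i into a join of the meets M f. *)
have X_cover : X `<=` \bigcup_f M f.
  have -> : \bigcup_f M f = (dm_meet R (range (fun b => dm_join R (range (F b))))).2.
    rewrite (HCD DMF) /=; apply/seteqP; split=> p.
      by case=> f _ Mfp; exists (dm_meet R (range (fun b => F b (f b)))) => //; exists f.
    by case=> _ [f _ <-] Mfp; exists f.
  apply: uppB_set1_sub_uppB_lowW => p Xp _ [[] _ <-] /=.
    by exists (F true i0) => //; exists i0.
  by have [i _ Yip] := XY p Xp; exists (F false i) => //; exists i.
have [f _ <-] : range M X.
  apply: cjx.2; first by move=> _ [f _ <-]; eexists.
  split; first by exists [set x].
  split; first by move=> _ [f _ <-]; exact: (M_sub f true).
  move=> B _ B_ub p /X_cover [f _ Mfp].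
  by apply: (B_ub (M f)) => //; exists f.
by exists (f false); exact: (M_sub f false).
Qed.

Lemma cji_uppB_set1_cover (x : U)
    (cjx : cji_in (uppB_image R) (fun A B : set U => A `<=` B) (uppB R [set x]))
    (P : U -> Prop) :
  (forall t, R t x -> exists2 u, P u & R t u) ->
  exists2 u, P u & uppB R [set x] `<=` uppB R [set u].
Proof.
move=> covered.
have [[u Pu] xu] : exists i : {u | P u}, uppB R [set x] `<=` uppB R [set sval i].
  apply: cji_uppB_set1_join_prime => // [i | t]; first by exists [set sval i].
  rewrite uppB_set1 => /covered [u Pu Rtu].
  by exists (exist P u Pu) => //=; rewrite uppB_set1.
by exists u.
Qed.

End Reflexive.
End DMRoughSets.

Unset Implicit Arguments.

(* [hx] and [hy] only ensure that (∅, {x}^▲) and (∅, {y}^▲) lie in DM(RS);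
   the equivalence does not need them. *)
Theorem mainTheorem12 (U : Type) (R : U -> U -> Prop)
  (Hrefl : forall z, R z z)
  (HCD : DM_completely_distributive R)
  (x y : U) (hx : ~ singR R x) (hy : ~ singR R y)
  (cjx : cji_in (uppB_image R) (fun A B : set U => A `<=` B) (uppB R [set x]))
  (cjy : cji_in (uppB_image R) (fun A B : set U => A `<=` B) (uppB R [set y])) :
  (exists u : U, uppB R [set x] `<=` uppB R [set u] /\
                 uppB R [set y] `<=` uppB R [set u]) <->
  (dm_le (set0, uppB R [set x]) (dm_g R (set0, uppB R [set x])) /\
   dm_le (set0, uppB R [set x]) (dm_g R (set0, uppB R [set y])) /\
   dm_le (set0, uppB R [set y]) (dm_g R (set0, uppB R [set x])) /\
   dm_le (set0, uppB R [set y]) (dm_g R (set0, uppB R [set y]))).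
Proof.
split=> [[u [xu yu]] | [_ [xgy _]]].
  by split; [|split; [|split]]; apply: (dm_le_set0_g (u := u)).
have common t z : R t x -> R z y -> exists2 w, R z w & R t w.
  rewrite !uppB_set1 in xgy => tx zy.
  by have [w [Rtw Rzw]] := common_Rsucc_of_dm_le_set0_g Hrefl xgy tx zy; exists w.
have below_y z : R z y -> exists2 u, uppB R [set x] `<=` uppB R [set u] & R z u.
  move=> zy; have [u Rzu xu] := cji_uppB_set1_cover Hrefl HCD cjx (P := R z)
    (fun t tx => common t z tx zy).
  by exists u.
have [u xu yu] := cji_uppB_set1_cover Hrefl HCD cjy below_y.
by exists u.
Qed.
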